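(* For any natural number $n \geq 1$, $\{\omega^n, (\omega^n)^\star\} \leq_c \{\omega^{2n-1}, (\omega^{2n-1})^\star\}$.
   Context: Structures have domains contained in $\omega$. For countable structures $\mathcal{A},\mathcal{B}$, the class $\{\mathcal{A},\mathcal{B}\}$ denotes the class of all structures (with domain $\subseteq\omega$) isomorphic to $\mathcal{A}$ or to $\mathcal{B}$. Linear orders are in the language $\{<\}$; $L^\star$ is the reverse of a linear order $L$; $\omega^m$ denotes ordinal exponentiation (as an order type). An enumeration operator $\Gamma$ is a c.e. set of pairs $(\alpha,\varphi)$ with $\alpha$ a finite set of basic (atomic or negated atomic) sentences of the input language with constants from $\omega$ and $\varphi$ a basic sentence of the output language with constants from $\omega$; $\Gamma(X)=\{\varphi : (\alpha,\varphi)\in\Gamma,\ \alpha\subseteq X\}$. $\Gamma$ is a computable embedding of $\mathcal{K}_0$ into $\mathcal{K}_1$ ($\mathcal{K}_0\leq_c\mathcal{K}_1$) if for every $\mathcal{A}\in\mathcal{K}_0$, $\Gamma$ applied to the atomic diagram of $\mathcal{A}$ is the atomic diagram of a structure $\Gamma(\mathcal{A})\in\mathcal{K}_1$, and for all $\mathcal{A},\mathcal{B}\in\mathcal{K}_0$, $\mathcal{A}\cong\mathcal{B}$ iff $\Gamma(\mathcal{A})\cong\Gamma(\mathcal{B})$. *)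

From Stdlib Require Import List Arith Lia.
Import ListNotations.

Inductive prf : Type :=
| PZero : prf
| PSucc : prf
| PProj : nat -> prf
| PComp : prf -> list prf -> prf
| PRec  : prf -> prf -> prf
| PMu   : prf -> prf.

Inductive eval : prf -> list nat -> nat -> Prop :=
| ev_zero xs : eval PZero xs 0
| ev_succ xs : eval PSucc xs (S (hd 0 xs))
| ev_proj i xs : eval (PProj i) xs (nth i xs 0)
| ev_comp f gs xs ys v : evals gs xs ys -> eval f ys v -> eval (PComp f gs) xs v
| ev_rec0 f g xs v : eval f xs v -> eval (PRec f g) (0 :: xs) v
| ev_recS f g n xs r v :
    eval (PRec f g) (n :: xs) r -> eval g (n :: r :: xs) v ->
    eval (PRec f g) (S n :: xs) v
| ev_mu f xs y :
    eval f (y :: xs) 0 ->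
    (forall z, z < y -> exists v, v <> 0 /\ eval f (z :: xs) v) ->
    eval (PMu f) xs y
with evals : list prf -> list nat -> list nat -> Prop :=
| evs_nil xs : evals [] xs []
| evs_cons g gs xs y ys : eval g xs y -> evals gs xs ys -> evals (g :: gs) xs (y :: ys).

Definition ce (S : nat -> Prop) : Prop :=
  exists e : prf, forall x, S x <-> exists y, eval e [x] y.

Inductive sent : Type :=
| SLt  : nat -> nat -> sent
| SNLt : nat -> nat -> sent
| SEq  : nat -> nat -> sent
| SNEq : nat -> nat -> sent.

Definition cpair (x y : nat) : nat := (x + y) * (x + y + 1) / 2 + y.

Definition enc_sent (s : sent) : nat :=
  match s with
  | SLt i j => 4 * cpair i j
  | SNLt i j => 4 * cpair i j + 1
  | SEq i j => 4 * cpair i j + 2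
  | SNEq i j => 4 * cpair i j + 3
  end.

Fixpoint enc_list (l : list sent) : nat :=
  match l with
  | [] => 0
  | s :: t => S (cpair (enc_sent s) (enc_list t))
  end.

Definition enc_pair (p : list sent * sent) : nat :=
  cpair (enc_list (fst p)) (enc_sent (snd p)).

(* An enumeration operator: a c.e. set of pairs (alpha, phi), alpha a finite
   set (given as a list) of basic sentences, phi a basic sentence. *)
Definition enum_operator (G : list sent * sent -> Prop) : Prop :=
  (forall p q, enc_pair p = enc_pair q -> G p -> G q) /\
  ce (fun x => exists p, enc_pair p = x /\ G p).

Definition apply_op (G : list sent * sent -> Prop) (X : sent -> Prop) (phi : sent) : Prop :=
  exists alpha, G (alpha, phi) /\ (forall psi, In psi alpha -> X psi).

Record pres (T : Type) := Pres { pdom : T -> Prop; prel : T -> T -> Prop }.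
Arguments Pres {T}.
Arguments pdom {T}.
Arguments prel {T}.

Definition str := pres nat.

Definition iso {T U : Type} (A : pres T) (B : pres U) : Prop :=
  exists f : T -> U,
    (forall x, pdom A x -> pdom B (f x)) /\
    (forall x y, pdom A x -> pdom A y -> f x = f y -> x = y) /\
    (forall y, pdom B y -> exists x, pdom A x /\ f x = y) /\
    (forall x y, pdom A x -> pdom A y -> (prel A x y <-> prel B (f x) (f y))).

Definition diag (A : str) (phi : sent) : Prop :=
  match phi with
  | SLt i j => pdom A i /\ pdom A j /\ prel A i j
  | SNLt i j => pdom A i /\ pdom A j /\ ~ prel A i j
  | SEq i j => pdom A i /\ pdom A j /\ i = j
  | SNEq i j => pdom A i /\ pdom A j /\ i <> j
  end.

(* omega^n = ordinals below omega^n = Cantor normal forms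
   omega^(n-1) a_(n-1) + ... + a_0, i.e. n-tuples of naturals (most significant
   first) under the lexicographic order. *)
Fixpoint lexlt (s t : list nat) : Prop :=
  match s, t with
  | a :: s', b :: t' => a < b \/ (a = b /\ lexlt s' t')
  | _, _ => False
  end.

Definition omega_pow (n : nat) : pres (list nat) :=
  Pres (fun s => length s = n) lexlt.

Definition rev_order {T : Type} (L : pres T) : pres T :=
  Pres (pdom L) (fun x y => prel L y x).

Definition cls_omega_pow (n : nat) (A : str) : Prop :=
  iso A (omega_pow n) \/ iso A (rev_order (omega_pow n)).

Definition comp_embeds (K0 K1 : str -> Prop) : Prop :=
  exists G : list sent * sent -> Prop,
    enum_operator G /\
    (forall A, K0 A -> exists B, K1 B /\ forall phi, apply_op G (diag A) phi <-> diag B phi) /\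
    (forall A A' B B', K0 A -> K0 A' ->
       (forall phi, apply_op G (diag A) phi <-> diag B phi) ->
       (forall phi, apply_op G (diag A') phi <-> diag B' phi) ->
       (iso A A' <-> iso B B')).

(* Gamma sends a linear order A with domain in omega to the lexicographic sum, over z in A, of the
   points y lying strictly between z and some element of A with a smaller number; the point (z, y)
   is coded as [cpair z y].  Each basic fact about Gamma(A) is forced by four facts a < y < b,
   a' < y' < b' of A (with z = max a b, z' = max a' b') and at most one more fact of A, so Gamma is
   a finite list of rule schemes, hence an enumeration operator.
   If A is isomorphic to omega^n, the points attached to z have first coordinate bounded by a
   number depending only on z, so merging the last coordinate of z with the first coordinate of y
   embeds Gamma(A) into omega^(2n-1); conversely, choosing the first coordinates of y and z above
   that of the least-numbered element w0 of A (so that w0 < y < z) embeds omega^(2n-1) into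
   Gamma(A).  Two well-orders embedding into each other are isomorphic, so Gamma(A) is isomorphic
   to omega^(2n-1).  Reversing A reverses Gamma(A), and omega^k is not isomorphic to its reverse
   for k >= 1, so Gamma matches the two isomorphism types of the source class with those of the
   target class. *)

From Stdlib Require Import List Arith Lia Wellfounded.
From Stdlib Require Import Classical ClassicalEpsilon FunctionalExtensionality.
Import ListNotations.

Fixpoint tri (n : nat) : nat := match n with 0 => 0 | S k => tri k + S k end.

Lemma cpair_tri x y : cpair x y = tri (x + y) + y.
Proof.
  assert (Htri : forall n, n * (n + 1) = tri n * 2) by (induction n; cbn [tri]; nia).
  unfold cpair. rewrite Htri, Nat.div_mul by lia. reflexivity.
Qed.

Lemma tri_add_lt m n : m < n -> tri m + m < tri n.
Proof. induction 1; cbn [tri]; lia. Qed.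

Lemma cpair_inj a b a' b' : cpair a b = cpair a' b' -> a = a' /\ b = b'.
Proof.
  rewrite !cpair_tri. intro E.
  destruct (lt_eq_lt_dec (a + b) (a' + b')) as [[H|H]|H].
  - apply tri_add_lt in H. lia.
  - rewrite H in E. lia.
  - apply tri_add_lt in H. lia.
Qed.

Lemma cpair_ge a b : a <= cpair a b /\ b <= cpair a b.
Proof.
  rewrite cpair_tri. enough (a + b <= tri (a + b)) by lia.
  induction (a + b); cbn [tri]; lia.
Qed.

Definition unpair (u : nat) : nat * nat :=
  epsilon (inhabits (0, 0)) (fun p => cpair (fst p) (snd p) = u).

Lemma unpair_cpair z y : unpair (cpair z y) = (z, y).
Proof.
  pose proof (epsilon_spec (inhabits (0, 0)) (fun p => cpair (fst p) (snd p) = cpair z y)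
                (ex_intro _ (z, y) eq_refl)) as E.
  unfold unpair. destruct (epsilon _ _) as [z' y']. cbn in E.
  apply cpair_inj in E as [-> ->]. reflexivity.
Qed.

Lemma enc_sent_inj s s' : enc_sent s = enc_sent s' -> s = s'.
Proof.
  destruct s as [i j|i j|i j|i j], s' as [i' j'|i' j'|i' j'|i' j']; cbn [enc_sent];
    intro E; try lia; assert (Ec : cpair i j = cpair i' j') by lia;
    apply cpair_inj in Ec as [-> ->]; reflexivity.
Qed.

Lemma enc_list_inj l l' : enc_list l = enc_list l' -> l = l'.
Proof.
  revert l'; induction l as [|s l IH]; intros [|s' l'] E; cbn in E; try lia; auto.
  injection E as E. apply cpair_inj in E as [Es El].
  apply enc_sent_inj in Es. apply IH in El. congruence.
Qed.

Lemma enc_pair_inj p q : enc_pair p = enc_pair q -> p = q.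
Proof.
  destruct p as [a s], q as [a' s']. unfold enc_pair; cbn. intro E.
  apply cpair_inj in E as [Ea Es].
  apply enc_list_inj in Ea. apply enc_sent_inj in Es. congruence.
Qed.

Lemma enc_sent_le_enc_list s l : In s l -> enc_sent s <= enc_list l.
Proof.
  induction l as [|s' l IH]; cbn [In enc_list]; [tauto|].
  pose proof (cpair_ge (enc_sent s') (enc_list l)).
  intros [->|Hin]; [|specialize (IH Hin)]; lia.
Qed.

Lemma enc_list_le_enc_pair p : enc_list (fst p) <= enc_pair p.
Proof. apply cpair_ge. Qed.

(** * Arithmetic expressions as mu-recursive functions *)

Definition p_const (k : nat) : prf := Nat.iter k (fun p => PComp PSucc [p]) PZero.
Definition p_pred : prf := PRec PZero (PProj 0).
Definition p_sub_rev : prf := PRec (PProj 0) (PComp p_pred [PProj 1]).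
Definition p_sub : prf := PComp p_sub_rev [PProj 1; PProj 0].
Definition p_add : prf := PRec (PProj 0) (PComp PSucc [PProj 1]).
Definition p_mul : prf := PRec PZero (PComp p_add [PProj 1; PProj 2]).
Definition p_tri : prf := PRec PZero (PComp p_add [PProj 1; PComp PSucc [PProj 0]]).

Lemma eval_comp1 f g xs y v : eval g xs y -> eval f [y] v -> eval (PComp f [g]) xs v.
Proof. intros. eapply ev_comp; [|eassumption]. repeat constructor; auto. Qed.

Lemma eval_comp2 f g1 g2 xs y1 y2 v :
  eval g1 xs y1 -> eval g2 xs y2 -> eval f [y1; y2] v -> eval (PComp f [g1; g2]) xs v.
Proof. intros. eapply ev_comp; [|eassumption]. repeat constructor; auto. Qed.

Lemma eval_proj i xs v : v = nth i xs 0 -> eval (PProj i) xs v.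
Proof. intros ->; constructor. Qed.

Lemma eval_succ xs v : v = S (hd 0 xs) -> eval PSucc xs v.
Proof. intros ->; constructor. Qed.

Lemma eval_p_const k xs : eval (p_const k) xs k.
Proof. induction k; [constructor|]. eapply eval_comp1; [apply IHk|]. now apply eval_succ. Qed.

Lemma eval_p_pred n : eval p_pred [n] (Nat.pred n).
Proof.
  induction n; [repeat constructor|].
  eapply ev_recS; [apply IHn|]. now apply eval_proj.
Qed.

Lemma eval_p_sub x y : eval p_sub [x; y] (x - y).
Proof.
  assert (Hrev : forall n, eval p_sub_rev [n; x] (x - n)).
  { induction n.
    - constructor. apply eval_proj. cbn; lia.
    - eapply ev_recS; [apply IHn|]. eapply eval_comp1; [now apply eval_proj|].
      replace (x - S n) with (Nat.pred (x - n)) by lia. apply eval_p_pred. }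
  eapply eval_comp2; try now apply eval_proj. apply Hrev.
Qed.

Lemma eval_p_add n y : eval p_add [n; y] (n + y).
Proof.
  induction n; [constructor; now apply eval_proj|].
  eapply ev_recS; [apply IHn|]. eapply eval_comp1; [now apply eval_proj|]. now apply eval_succ.
Qed.

Lemma eval_p_mul n y : eval p_mul [n; y] (n * y).
Proof.
  induction n; [repeat constructor|].
  eapply ev_recS; [apply IHn|]. rewrite Nat.mul_succ_l.
  eapply eval_comp2; try now apply eval_proj. apply eval_p_add.
Qed.

Lemma eval_p_tri n : eval p_tri [n] (tri n).
Proof.
  induction n; [repeat constructor|].
  eapply ev_recS; [apply IHn|].
  eapply eval_comp2; [now apply eval_proj| |apply eval_p_add].
  eapply eval_comp1; [now apply eval_proj|]. now apply eval_succ.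
Qed.

Inductive expr : Type :=
| EVar (i : nat)
| EConst (k : nat)
| EAdd (a b : expr)
| EMul (a b : expr)
| ESub (a b : expr)
| ETri (a : expr)
| EBProd (b body : expr).

Fixpoint prod_upto (n : nat) (g : nat -> nat) : nat :=
  match n with 0 => g 0 | S k => prod_upto k g * g (S k) end.

Fixpoint expr_val (e : expr) (env : list nat) : nat :=
  match e with
  | EVar i => nth i env 0
  | EConst k => k
  | EAdd a b => expr_val a env + expr_val b env
  | EMul a b => expr_val a env * expr_val b env
  | ESub a b => expr_val a env - expr_val b env
  | ETri a => tri (expr_val a env)
  | EBProd b body => prod_upto (expr_val b env) (fun v => expr_val body (v :: env))
  end.

Lemma prod_upto_eq_0 n g : prod_upto n g = 0 <-> exists v, v <= n /\ g v = 0.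
Proof.
  induction n; cbn [prod_upto].
  - split; [eauto|]. intros [v [Hv Hg]]. now replace v with 0 in Hg by lia.
  - rewrite Nat.mul_eq_0, IHn. split.
    + intros [[v [Hv Hg]]|Hg]; eauto.
    + intros [v [Hv Hg]]. destruct (Nat.eq_dec v (S n)) as [->|Hne]; auto.
      left. exists v. split; [lia|auto].
Qed.

Lemma prod_upto_ext n g g' : (forall v, g v = g' v) -> prod_upto n g = prod_upto n g'.
Proof. intro Hg. induction n; cbn [prod_upto]; congruence. Qed.

Definition projs (k N : nat) : list prf := map PProj (seq k N).

Fixpoint compile (N : nat) (e : expr) : prf :=
  match e with
  | EVar i => PProj i
  | EConst k => p_const k
  | EAdd a b => PComp p_add [compile N a; compile N b]
  | EMul a b => PComp p_mul [compile N a; compile N b]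
  | ESub a b => PComp p_sub [compile N a; compile N b]
  | ETri a => PComp p_tri [compile N a]
  | EBProd b body =>
      (* recursion on the bound; the step receives [v; partial product; env] *)
      PComp (PRec (PComp (compile (S N) body) (PZero :: projs 0 N))
                  (PComp p_mul [PProj 1;
                     PComp (compile (S N) body) (PComp PSucc [PProj 0] :: projs 2 N)]))
            (compile N b :: projs 0 N)
  end.

Lemma evals_projs N k xs : evals (projs k N) xs (map (fun i => nth i xs 0) (seq k N)).
Proof. revert k; induction N; intro k; constructor; [constructor|apply IHN]. Qed.

Lemma map_nth_seq_app env l :
  map (fun i => nth i (l ++ env) 0) (seq (length l) (length env)) = env.
Proof.
  revert l; induction env as [|a env IH]; intro l; cbn; [reflexivity|].
  rewrite nth_middle. f_equal.
  specialize (IH (l ++ [a])). rewrite <- app_assoc, length_app, Nat.add_1_r in IH. exact IH.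
Qed.

Lemma compile_correct e : forall env, eval (compile (length env) e) env (expr_val e env).
Proof.
  induction e; intro env; cbn [compile expr_val].
  - constructor.
  - apply eval_p_const.
  - eapply eval_comp2; eauto. apply eval_p_add.
  - eapply eval_comp2; eauto. apply eval_p_mul.
  - eapply eval_comp2; eauto. apply eval_p_sub.
  - eapply eval_comp1; eauto. apply eval_p_tri.
  - pose proof (map_nth_seq_app env []) as Eenv. cbn in Eenv.
    eapply ev_comp; [constructor; [apply IHe1|apply evals_projs]|]. rewrite Eenv.
    induction (expr_val e1 env) as [|n IHn]; cbn [prod_upto].
    + constructor. eapply ev_comp; [constructor; [constructor|apply evals_projs]|].
      rewrite Eenv. apply (IHe2 (0 :: env)).
    + eapply ev_recS; [apply IHn|].
      eapply eval_comp2; [now apply eval_proj| |apply eval_p_mul].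
      eapply ev_comp.
      * constructor; [|apply evals_projs].
        eapply eval_comp1; [now apply eval_proj|]. now apply eval_succ.
      * pose proof (map_nth_seq_app env [n; prod_upto n (fun v => expr_val e2 (v :: env))]) as E2.
        cbn in E2 |- *. rewrite E2. apply (IHe2 (S n :: env)).
Qed.

Fixpoint mu_free (p : prf) : Prop :=
  match p with
  | PZero | PSucc | PProj _ => True
  | PComp f gs => mu_free f /\ fold_right and True (map mu_free gs)
  | PRec f g => mu_free f /\ mu_free g
  | PMu _ => False
  end.

Scheme eval_mut := Induction for eval Sort Prop
with evals_mut := Induction for evals Sort Prop.

Lemma eval_mu_free_det p xs v : eval p xs v -> mu_free p -> forall v', eval p xs v' -> v = v'.
Proof.
  revert p xs v.
  apply (eval_mut (fun p xs v _ => mu_free p -> forall v', eval p xs v' -> v = v')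
                  (fun gs xs ys _ => fold_right and True (map mu_free gs) ->
                                     forall ys', evals gs xs ys' -> ys = ys'));
    try (intros; match goal with H : eval _ _ _ |- _ => inversion H end; auto; fail).
  - intros f gs xs ys v _ IHgs _ IHf [Mf Mgs] v' H. inversion H; subst.
    assert (ys = ys0) by auto. subst. auto.
  - intros f g xs v _ IHf [Mf _] v' H. inversion H; subst. auto.
  - intros f g n xs r v _ IH1 _ IH2 [Mf Mg] v' H. inversion H; subst.
    assert (r = r0) by (apply IH1; cbn; auto). subst. auto.
  - intros _ _ _ _ _ _ [].
  - intros xs _ ys' H. inversion H; auto.
  - intros g gs xs y ys _ IHg _ IHgs [Mg Mgs] ys' H. inversion H; subst. f_equal; auto.
Qed.

Lemma compile_mu_free e N : mu_free (compile N e).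
Proof.
  assert (Hprojs : forall k N, fold_right and True (map mu_free (projs k N))).
  { intros k M. revert k. induction M; intro k; cbn; [exact I|split; [exact I|apply (IHM (S k))]]. }
  revert N. induction e; intro N; cbn; repeat split; auto.
  induction k; cbn; auto.
Qed.

Lemma ce_of_zero_test (test : expr) (P : nat -> Prop) :
  (forall x, P x <-> expr_val test [x] = 0) -> ce P.
Proof.
  (* The search variable is ignored: the minimisation halts, at 0, iff the test is 0. *)
  intro HP. exists (PMu (PComp (compile 1 test) [PProj 1])). intro x. rewrite HP. split.
  - intro H0. exists 0. constructor; [|intros; lia].
    apply eval_comp1 with (y := x); [now apply eval_proj|].
    pose proof (compile_correct test [x]) as Hc. rewrite H0 in Hc. exact Hc.
  - intros [y Hy]. inversion Hy as [| | | | | |f xs y' Hz _]; subst.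
    inversion Hz as [| | |f' gs xs' ys v Hgs Hf| | |]; subst.
    inversion Hgs as [|g gs' xs'' y1 ys1 Hg Hnil]; subst. inversion Hnil; subst.
    inversion Hg; subst. cbn in Hf.
    symmetry. eapply eval_mu_free_det; [exact Hf|apply compile_mu_free|].
    apply (compile_correct test [x]).
Qed.

Fixpoint expr_closed (k : nat) (e : expr) : Prop :=
  match e with
  | EVar i => i < k
  | EConst _ => True
  | EAdd a b | EMul a b | ESub a b => expr_closed k a /\ expr_closed k b
  | ETri a => expr_closed k a
  | EBProd b body => expr_closed k b /\ expr_closed (S k) body
  end.

Lemma expr_val_app_closed e ws env :
  expr_closed (length ws) e -> expr_val e (ws ++ env) = expr_val e ws.
Proof.
  revert ws; induction e; intros ws Hc; cbn in Hc |- *;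
    try (destruct Hc; f_equal; auto; fail).
  - now apply app_nth1.
  - now rewrite IHe.
  - destruct Hc as [Hb Hbody]. rewrite IHe1 by exact Hb.
    apply prod_upto_ext. intro v. apply (IHe2 (v :: ws)), Hbody.
Qed.

Fixpoint bsearch_from (d k : nat) (body : expr) : expr :=
  match k with
  | 0 => body
  | S k => EBProd (EVar d) (bsearch_from (S d) k body)
  end.

Lemma expr_val_bsearch_from_eq_0 k : forall d body env,
  expr_val (bsearch_from d k body) env = 0 <->
  exists ws, length ws = k /\ Forall (fun w => w <= nth d env 0) ws /\
             expr_val body (ws ++ env) = 0.
Proof.
  induction k as [|k IH]; intros d body env; cbn [bsearch_from expr_val].
  - split; [now exists []|]. intros [[|w ws] [Hl [_ H]]]; [exact H|discriminate].
  - rewrite prod_upto_eq_0. split.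
    + intros [v [Hv H]]. apply IH in H as [ws [Hl [Hb H]]].
      exists (ws ++ [v]). rewrite length_app, Forall_app, <- app_assoc. cbn in *.
      repeat split; auto; lia.
    + intros [ws [Hl [Hb H]]].
      destruct (exists_last (l := ws)) as [ws' [v ->]]; [intros ->; discriminate|].
      rewrite length_app, Forall_app in *. destruct Hb as [Hb' Hv]. inversion_clear Hv.
      exists v. split; [assumption|]. apply IH. exists ws'.
      rewrite <- app_assoc in H. cbn in *. repeat split; auto; lia.
Qed.

Definition eprod (es : list expr) : expr := fold_right EMul (EConst 1) es.

Lemma expr_val_eprod_eq_0 es env :
  expr_val (eprod es) env = 0 <-> exists e, In e es /\ expr_val e env = 0.
Proof.
  induction es as [|e es IH]; cbn [eprod fold_right expr_val In].
  - split; [discriminate|]. now intros [e [[] _]].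
  - rewrite Nat.mul_eq_0. fold (eprod es). rewrite IH. split.
    + intros [H|[e' [Hin H]]]; eauto.
    + intros [e' [[<-|Hin] H]]; eauto.
Qed.

Definition eabs (a b : expr) : expr := EAdd (ESub a b) (ESub b a).
Definition eneq (a b : expr) : expr := ESub (EConst 1) (eabs a b).
Definition emax (a b : expr) : expr := EAdd a (ESub b a).
Definition ecpair (a b : expr) : expr := EAdd (ETri (EAdd a b)) b.

Lemma expr_val_eabs_eq_0 a b env :
  expr_val (eabs a b) env = 0 <-> expr_val a env = expr_val b env.
Proof. cbn [eabs expr_val]. lia. Qed.

Lemma expr_val_eneq_eq_0 a b env :
  expr_val (eneq a b) env = 0 <-> expr_val a env <> expr_val b env.
Proof. cbn [eneq eabs expr_val]. lia. Qed.

Lemma expr_val_emax a b env : expr_val (emax a b) env = Nat.max (expr_val a env) (expr_val b env).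
Proof. cbn [emax expr_val]. lia. Qed.

Lemma expr_val_ecpair a b env : expr_val (ecpair a b) env = cpair (expr_val a env) (expr_val b env).
Proof. now rewrite cpair_tri. Qed.

(** * The operator Gamma *)

Definition lt_in {T : Type} (L : pres T) (x y : T) : Prop :=
  pdom L x /\ pdom L y /\ prel L x y.

Definition spans (A : str) (z y : nat) : Prop :=
  exists a b, z = Nat.max a b /\ lt_in A a y /\ lt_in A y b.

Definition interval_sum (A : str) : str :=
  Pres (fun u => exists z y, u = cpair z y /\ spans A z y)
       (fun u u' => exists z y z' y', u = cpair z y /\ u' = cpair z' y' /\
                      (prel A z z' \/ (z = z' /\ prel A y y'))).

(* The premises [a < y < b] and [a' < y' < b'] certify that [u] and [u'] are points of
   [interval_sum A]. *)
Definition Gamma (p : list sent * sent) : Prop :=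
  exists a y b a' y' b',
    let P := [SLt a y; SLt y b; SLt a' y'; SLt y' b'] in
    let z := Nat.max a b in
    let z' := Nat.max a' b' in
    let u := cpair z y in
    let u' := cpair z' y' in
    p = (P ++ [SLt z z'], SLt u u') \/
    (z = z' /\ p = (P ++ [SLt y y'], SLt u u')) \/
    (z = z' /\ p = (P ++ [SNLt y y'], SNLt u u')) \/
    (z <> z' /\ p = (P ++ [SNLt z z'], SNLt u u')) \/
    (u = u' /\ p = (P, SEq u u')) \/
    (u <> u' /\ p = (P, SNEq u u')).

Lemma interval_sum_rel A z y z' y' :
  prel (interval_sum A) (cpair z y) (cpair z' y') <-> prel A z z' \/ (z = z' /\ prel A y y').
Proof.
  cbn. split.
  - intros (z1 & y1 & z1' & y1' & E & E' & R).
    apply cpair_inj in E as [-> ->]. apply cpair_inj in E' as [-> ->]. exact R.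
  - intro R. now exists z, y, z', y'.
Qed.

Lemma pdom_max (A : str) a b : pdom A a -> pdom A b -> pdom A (Nat.max a b).
Proof. intros Ha Hb. now destruct (Nat.max_spec a b) as [[_ ->]|[_ ->]]. Qed.

Lemma spans_dom A z y : spans A z y -> pdom A z /\ pdom A y.
Proof. intros (a & b & -> & (Ha & Hy & _) & (_ & Hb & _)). auto using pdom_max. Qed.

Lemma apply_Gamma_intro A a y b a' y' b' extra phi :
  lt_in A a y -> lt_in A y b -> lt_in A a' y' -> lt_in A y' b' ->
  (forall s, In s extra -> diag A s) ->
  Gamma ([SLt a y; SLt y b; SLt a' y'; SLt y' b'] ++ extra, phi) ->
  apply_op Gamma (diag A) phi.
Proof.
  intros Hay Hyb Hay' Hyb' Hextra HG. eexists. split; [exact HG|].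
  intros s [<-|[<-|[<-|[<-|Hs]]]]; auto.
Qed.

Lemma Gamma_diag_sound A : (forall x, pdom A x -> ~ prel A x x) ->
  forall phi, apply_op Gamma (diag A) phi -> diag (interval_sum A) phi.
Proof.
  intros Hirr phi (alpha & (a & y & b & a' & y' & b' & H) & Hal); cbv zeta in H.
  destruct H as [H|[[Hs H]|[[Hs H]|[[Hs H]|[[Hs H]|[Hs H]]]]]]; injection H as -> ->;
    assert (Hsp : spans A (Nat.max a b) y)
      by (exists a, b; split; [reflexivity|split];
          [apply (Hal (SLt a y))|apply (Hal (SLt y b))]; cbn; tauto);
    assert (Hsp' : spans A (Nat.max a' b') y')
      by (exists a', b'; split; [reflexivity|split];
          [apply (Hal (SLt a' y'))|apply (Hal (SLt y' b'))]; cbn; tauto);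
    pose proof (spans_dom _ _ _ Hsp) as [Hz Hy];
    pose proof (spans_dom _ _ _ Hsp') as [Hz' Hy'];
    (split; [now exists (Nat.max a b), y|split; [now exists (Nat.max a' b'), y'|]]);
    try rewrite interval_sum_rel.
  - left. apply (Hal (SLt _ _)). cbn; tauto.
  - right. split; [exact Hs|]. apply (Hal (SLt y y')). cbn; tauto.
  - destruct (Hal (SNLt y y')) as (_ & _ & Hn); [cbn; tauto|].
    rewrite <- Hs. intros [R|[_ R]]; [exact (Hirr _ Hz R)|exact (Hn R)].
  - destruct (Hal (SNLt (Nat.max a b) (Nat.max a' b'))) as (_ & _ & Hn); [cbn; tauto|].
    intros [R|[E _]]; [exact (Hn R)|exact (Hs E)].
  - exact Hs.
  - exact Hs.
Qed.

Lemma Gamma_diag_complete A phi : diag (interval_sum A) phi -> apply_op Gamma (diag A) phi.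
Proof.
  destruct phi as [u u'|u u'|u u'|u u']; intros (Hu & Hu' & R);
    destruct Hu as (z & y & -> & a & b & -> & Hay & Hyb);
    destruct Hu' as (z' & y' & -> & a' & b' & -> & Hay' & Hyb');
    pose proof (pdom_max A a b (proj1 Hay) (proj1 (proj2 Hyb))) as Hz;
    pose proof (pdom_max A a' b' (proj1 Hay') (proj1 (proj2 Hyb'))) as Hz';
    try rewrite interval_sum_rel in R.
  - destruct R as [R|[E R]].
    + apply (apply_Gamma_intro A a y b a' y' b' [SLt (Nat.max a b) (Nat.max a' b')]); auto.
      * intros s [<-|[]]. cbn. auto.
      * exists a, y, b, a', y', b'. now left.
    + apply (apply_Gamma_intro A a y b a' y' b' [SLt y y']); auto.
      * intros s [<-|[]]. cbn. split; [apply Hay|split; [apply Hay'|exact R]].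
      * exists a, y, b, a', y', b'. now right; left.
  - destruct (Nat.eq_dec (Nat.max a b) (Nat.max a' b')) as [E|E].
    + apply (apply_Gamma_intro A a y b a' y' b' [SNLt y y']); auto.
      * intros s [<-|[]]. cbn. split; [apply Hay|split; [apply Hay'|]]. tauto.
      * exists a, y, b, a', y', b'. now right; right; left.
    + apply (apply_Gamma_intro A a y b a' y' b' [SNLt (Nat.max a b) (Nat.max a' b')]); auto.
      * intros s [<-|[]]. cbn. tauto.
      * exists a, y, b, a', y', b'. now right; right; right; left.
  - apply (apply_Gamma_intro A a y b a' y' b' []); [auto..|intros s []|].
    exists a, y, b, a', y', b'. now right; right; right; right; left.
  - apply (apply_Gamma_intro A a y b a' y' b' []); [auto..|intros s []|].
    exists a, y, b, a', y', b'. now right; right; right; right; right.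
Qed.

Lemma Gamma_diag A : (forall x, pdom A x -> ~ prel A x x) ->
  forall phi, apply_op Gamma (diag A) phi <-> diag (interval_sum A) phi.
Proof.
  intros Hirr phi. split; [now apply Gamma_diag_sound|apply Gamma_diag_complete].
Qed.

(** * Gamma is an enumeration operator *)

Inductive kind : Type := KLt | KNLt | KEq | KNEq.

Definition mk_sent (k : kind) : nat -> nat -> sent :=
  match k with KLt => SLt | KNLt => SNLt | KEq => SEq | KNEq => SNEq end.

Definition kind_code (k : kind) : nat :=
  match k with KLt => 0 | KNLt => 1 | KEq => 2 | KNEq => 3 end.

Lemma enc_mk_sent k i j : enc_sent (mk_sent k i j) = 4 * cpair i j + kind_code k.
Proof. destruct k; cbn [enc_sent mk_sent kind_code]; lia. Qed.

Lemma mk_sent_args_le k i j : i <= enc_sent (mk_sent k i j) /\ j <= enc_sent (mk_sent k i j).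
Proof. rewrite enc_mk_sent. pose proof (cpair_ge i j). lia. Qed.

Definition template : Type := kind * expr * expr.

Definition inst (env : list nat) (t : template) : sent :=
  let '(k, a, b) := t in mk_sent k (expr_val a env) (expr_val b env).

Definition template_closed (n : nat) (t : template) : Prop :=
  let '(_, a, b) := t in expr_closed n a /\ expr_closed n b.

Lemma inst_app_closed t ws env :
  template_closed (length ws) t -> inst (ws ++ env) t = inst ws t.
Proof.
  destruct t as [[k a] b]. intros [Ha Hb]. cbn.
  now rewrite !expr_val_app_closed.
Qed.

Definition esent (t : template) : expr :=
  let '(k, a, b) := t in EAdd (EMul (EConst 4) (ecpair a b)) (EConst (kind_code k)).

Fixpoint elist (ts : list template) : expr :=
  match ts with
  | [] => EConst 0
  | t :: ts => EAdd (ecpair (esent t) (elist ts)) (EConst 1)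
  end.

Lemma expr_val_esent t env : expr_val (esent t) env = enc_sent (inst env t).
Proof.
  destruct t as [[k a] b]. cbn [esent inst].
  rewrite enc_mk_sent, <- expr_val_ecpair. cbn [expr_val]. lia.
Qed.

Lemma expr_val_elist ts env : expr_val (elist ts) env = enc_list (map (inst env) ts).
Proof.
  induction ts as [|t ts IH]; [reflexivity|]. cbn [elist map enc_list].
  cbn [expr_val]. rewrite expr_val_ecpair, expr_val_esent, IH. lia.
Qed.

Record rule : Type := Rule { rule_extra : list template; rule_concl : template; rule_side : expr }.

Definition spans_templates : list template :=
  [(KLt, EVar 0, EVar 1); (KLt, EVar 1, EVar 2); (KLt, EVar 3, EVar 4); (KLt, EVar 4, EVar 5)].

Definition ez : expr := emax (EVar 0) (EVar 2).
Definition ez' : expr := emax (EVar 3) (EVar 5).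
Definition eu : expr := ecpair ez (EVar 1).
Definition eu' : expr := ecpair ez' (EVar 4).

(* The witnesses [a; y; b; a'; y'; b'] are [EVar 0], ..., [EVar 5]; a rule applies when its side
   expression evaluates to 0. *)
Definition Gamma_rules : list rule :=
  [Rule [(KLt, ez, ez')] (KLt, eu, eu') (EConst 0);
   Rule [(KLt, EVar 1, EVar 4)] (KLt, eu, eu') (eabs ez ez');
   Rule [(KNLt, EVar 1, EVar 4)] (KNLt, eu, eu') (eabs ez ez');
   Rule [(KNLt, ez, ez')] (KNLt, eu, eu') (eneq ez ez');
   Rule [] (KEq, eu, eu') (eabs eu eu');
   Rule [] (KNEq, eu, eu') (eneq eu eu')].

Definition instance (rl : rule) (env : list nat) : list sent * sent :=
  (map (inst env) (spans_templates ++ rule_extra rl), inst env (rule_concl rl)).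

Section SpansEnv.
Variables a y b a' y' b' : nat.
Let ws := [a; y; b; a'; y'; b'].

Lemma expr_val_ez : expr_val ez ws = Nat.max a b.
Proof. apply expr_val_emax. Qed.
Lemma expr_val_ez' : expr_val ez' ws = Nat.max a' b'.
Proof. apply expr_val_emax. Qed.
Lemma expr_val_eu : expr_val eu ws = cpair (Nat.max a b) y.
Proof. unfold eu. now rewrite expr_val_ecpair, expr_val_ez. Qed.
Lemma expr_val_eu' : expr_val eu' ws = cpair (Nat.max a' b') y'.
Proof. unfold eu'. now rewrite expr_val_ecpair, expr_val_ez'. Qed.
End SpansEnv.

Ltac simpl_rule :=
  unfold instance in *;
  cbn [spans_templates app map inst mk_sent rule_extra rule_concl rule_side expr_val nth] in *;
  rewrite ?expr_val_eabs_eq_0, ?expr_val_eneq_eq_0 in *;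
  rewrite ?expr_val_eu, ?expr_val_eu', ?expr_val_ez, ?expr_val_ez' in *.

Lemma Gamma_iff_rules p :
  Gamma p <-> Exists (fun rl => exists ws, length ws = 6 /\
                        expr_val (rule_side rl) ws = 0 /\ p = instance rl ws) Gamma_rules.
Proof.
  unfold Gamma_rules. rewrite !Exists_cons, Exists_nil. split.
  - intros (a & y & b & a' & y' & b' & H); cbv zeta in H.
    destruct H as [H|[[Hs H]|[[Hs H]|[[Hs H]|[[Hs H]|[Hs H]]]]]]; subst p;
      repeat (first [left; exists [a; y; b; a'; y'; b']; simpl_rule; solve [repeat split; auto]
                    | right]).
  - intro H. repeat destruct H as [H|H]; try contradiction;
      destruct H as (ws & Hl & Hs & ->);
      destruct ws as [|a [|y [|b [|a' [|y' [|b' [|]]]]]]]; try discriminate;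
      exists a, y, b, a', y', b'; cbv zeta; simpl_rule; tauto.
Qed.

Definition rule_closed (rl : rule) : Prop :=
  Forall (template_closed 6) (spans_templates ++ rule_extra rl) /\
  template_closed 6 (rule_concl rl) /\ expr_closed 6 (rule_side rl).

Lemma Gamma_rules_closed rl : In rl Gamma_rules -> rule_closed rl.
Proof. revert rl. apply Forall_forall. repeat constructor; cbn; lia. Qed.

Lemma instance_app_closed rl ws env :
  rule_closed rl -> length ws = 6 -> instance rl (ws ++ env) = instance rl ws.
Proof.
  intros [Hprem [Hconcl _]] Hl. unfold instance. rewrite <- Hl in *. f_equal.
  - apply map_ext_Forall. revert Hprem. apply Forall_impl. intro t. apply inst_app_closed.
  - now apply inst_app_closed.
Qed.

Lemma spans_args_le_instance rl ws :
  length ws = 6 -> Forall (fun w => w <= enc_pair (instance rl ws)) ws.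
Proof.
  intro Hl. destruct ws as [|a [|y [|b [|a' [|y' [|b' [|]]]]]]]; try discriminate.
  set (p := instance rl [a; y; b; a'; y'; b']).
  assert (Hprem : forall k i j, In (mk_sent k i j) (fst p) -> i <= enc_pair p /\ j <= enc_pair p).
  { intros k i j Hin. apply enc_sent_le_enc_list in Hin.
    pose proof (mk_sent_args_le k i j). pose proof (enc_list_le_enc_pair p). lia. }
  destruct (Hprem KLt a y) as [Ha Hy]; [cbn; tauto|].
  destruct (Hprem KLt y b) as [_ Hb]; [cbn; tauto|].
  destruct (Hprem KLt a' y') as [Ha' Hy']; [cbn; tauto|].
  destruct (Hprem KLt y' b') as [_ Hb']; [cbn; tauto|].
  repeat constructor; assumption.
Qed.

Definition ecode (rl : rule) : expr :=
  ecpair (elist (spans_templates ++ rule_extra rl)) (esent (rule_concl rl)).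

Lemma expr_val_ecode rl env : expr_val (ecode rl) env = enc_pair (instance rl env).
Proof. unfold ecode. now rewrite expr_val_ecpair, expr_val_elist, expr_val_esent. Qed.

(* The code [x] is the environment entry just above the six bounded witnesses. *)
Definition rule_test (rl : rule) : expr :=
  bsearch_from 0 6 (EAdd (eabs (EVar 6) (ecode rl)) (rule_side rl)).

Lemma rule_test_spec rl x : rule_closed rl ->
  expr_val (rule_test rl) [x] = 0 <->
  exists ws, length ws = 6 /\ expr_val (rule_side rl) ws = 0 /\ x = enc_pair (instance rl ws).
Proof.
  intro Hrl. unfold rule_test. rewrite expr_val_bsearch_from_eq_0.
  assert (Hside : forall ws, length ws = 6 ->
            expr_val (rule_side rl) (ws ++ [x]) = expr_val (rule_side rl) ws).
  { intros ws Hl. apply expr_val_app_closed. rewrite Hl. apply Hrl. }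
  assert (Hx : forall ws, length ws = 6 -> expr_val (EVar 6) (ws ++ [x]) = x).
  { intros ws Hl. cbn. rewrite app_nth2 by lia. now rewrite Hl. }
  split.
  - intros (ws & Hl & _ & H). cbn [expr_val] in H. fold (eabs (EVar 6) (ecode rl)) in H.
    pose proof (proj1 (expr_val_eabs_eq_0 (EVar 6) (ecode rl) (ws ++ [x]))) as Hcode.
    rewrite Hx, expr_val_ecode, instance_app_closed in Hcode by assumption.
    exists ws. rewrite <- Hside by assumption. repeat split; [assumption|lia|apply Hcode; lia].
  - intros (ws & Hl & Hs & Hc). exists ws. split; [exact Hl|]. split.
    + cbn. rewrite Hc. now apply spans_args_le_instance.
    + cbn [expr_val]. fold (eabs (EVar 6) (ecode rl)).
      rewrite Hside by exact Hl.
      enough (expr_val (eabs (EVar 6) (ecode rl)) (ws ++ [x]) = 0) by lia.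
      apply expr_val_eabs_eq_0.
      now rewrite Hx, expr_val_ecode, instance_app_closed.
Qed.

Lemma Gamma_enum : enum_operator Gamma.
Proof.
  split.
  - intros p q E Hp. apply enc_pair_inj in E. now subst.
  - apply (ce_of_zero_test (eprod (map rule_test Gamma_rules))). intro x.
    rewrite expr_val_eprod_eq_0. split.
    + intros (p & <- & Hp). apply Gamma_iff_rules, Exists_exists in Hp as (rl & Hin & ws & H).
      exists (rule_test rl). split; [now apply in_map|].
      apply rule_test_spec; [now apply Gamma_rules_closed|].
      exists ws. intuition congruence.
    + intros (e & Hin & He). apply in_map_iff in Hin as (rl & <- & Hin).
      apply rule_test_spec in He as (ws & Hl & Hs & ->);
        [|now apply Gamma_rules_closed].
      exists (instance rl ws). split; [reflexivity|].
      apply Gamma_iff_rules, Exists_exists. exists rl. split; [exact Hin|]. exists ws. auto.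
Qed.

(** * Well-orders embedding into each other are isomorphic *)

Definition linear_order {T : Type} (L : pres T) : Prop :=
  (forall x, pdom L x -> ~ prel L x x) /\
  (forall x y z, pdom L x -> pdom L y -> pdom L z -> prel L x y -> prel L y z -> prel L x z) /\
  (forall x y, pdom L x -> pdom L y -> prel L x y \/ x = y \/ prel L y x).

Definition order_embedding {T U : Type} (L : pres T) (M : pres U) (f : T -> U) : Prop :=
  (forall x, pdom L x -> pdom M (f x)) /\
  (forall x y, pdom L x -> pdom L y -> prel L x y -> prel M (f x) (f y)).

Definition well_founded_order {T : Type} (L : pres T) : Prop := well_founded (lt_in L).

Lemma well_founded_order_embedding {T U : Type} (L : pres T) (M : pres U) f :
  order_embedding L M f -> well_founded_order M -> well_founded_order L.
Proof.
  intros [Hdom Hrel] WM.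
  apply (wf_incl _ _ (fun x y => lt_in M (f x) (f y))).
  - intros x y (Hx & Hy & R). repeat split; auto.
  - now apply wf_inverse_image.
Qed.

Lemma well_founded_order_no_descent {T : Type} (M : pres T) e :
  well_founded_order M -> order_embedding M M e -> forall x, pdom M x -> ~ prel M (e x) x.
Proof.
  intros WM [Hdom Hrel] x. induction x as [x IH] using (well_founded_ind WM).
  intros Hx R. apply (IH (e x)); [repeat split; auto|auto|].
  apply Hrel; auto.
Qed.

Lemma well_founded_minimal {U : Type} (R : U -> U -> Prop) (P : U -> Prop) :
  well_founded R -> (exists m, P m) -> exists m, P m /\ forall m', P m' -> ~ R m' m.
Proof.
  intros WR [m Pm]. apply NNPP. intro Hnone. revert Pm.
  apply (well_founded_ind WR (fun x => ~ P x)).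
  intros x IH Px. apply Hnone. exists x. split; [exact Px|]. intros m' Pm' R'. exact (IH m' R' Pm').
Qed.

Section MutualEmbeddings.

Context {T U : Type} (L : pres T) (M : pres U) (e1 : T -> U) (e2 : U -> T).
Hypotheses (HL : linear_order L) (HM : linear_order M) (WM : well_founded_order M)
  (He1 : order_embedding L M e1) (He2 : order_embedding M L e2) (HU : inhabited U).

Let WL : well_founded_order L := well_founded_order_embedding L M e1 He1 WM.

Definition least_in (P : U -> Prop) (m : U) : Prop := P m /\ forall m', P m' -> ~ prel M m' m.

Definition cmp_map : T -> U :=
  Fix WL (fun _ => U) (fun x rec =>
    epsilon HU (least_in (fun m => pdom M m /\ forall y (H : lt_in L y x), prel M (rec y H) m))).

Definition strict_ub (x : T) (m : U) : Prop :=
  pdom M m /\ forall y, lt_in L y x -> prel M (cmp_map y) m.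

Lemma cmp_map_least x : (exists m, strict_ub x m) -> least_in (strict_ub x) (cmp_map x).
Proof.
  intro Hex.
  assert (Hunfold : cmp_map x = epsilon HU (least_in (strict_ub x))).
  { unfold cmp_map at 1. rewrite Fix_eq; [reflexivity|].
    intros x' f g Hfg. replace g with f; [reflexivity|].
    apply functional_extensionality_dep. intro y.
    apply functional_extensionality_dep. intro H. apply Hfg. }
  rewrite Hunfold. apply epsilon_spec.
  destruct (well_founded_minimal _ _ WM Hex) as [m [Hm Hmin]].
  exists m. split; [exact Hm|]. intros m' Hm' R. apply (Hmin m' Hm').
  repeat split; [apply Hm'|apply Hm|exact R].
Qed.

Lemma cmp_map_spec x : pdom L x ->
  least_in (strict_ub x) (cmp_map x) /\ (cmp_map x = e1 x \/ prel M (cmp_map x) (e1 x)).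
Proof.
  destruct HM as (_ & HtransM & HtotM). pose proof He1 as [He1dom He1rel].
  induction x as [x IH] using (well_founded_ind WL). intro Hx.
  assert (Hub : strict_ub x (e1 x)).
  { split; [now apply He1dom|]. intros y Hy.
    pose proof Hy as (Hyd & _ & R). destruct (IH y Hy Hyd) as [[[Hhy _] _] [E|R']].
    - rewrite E. now apply He1rel.
    - apply HtransM with (e1 y); auto. }
  pose proof (cmp_map_least x (ex_intro _ _ Hub)) as Hleast.
  split; [exact Hleast|].
  destruct Hleast as [[Hh _] Hmin].
  destruct (HtotM (cmp_map x) (e1 x) Hh (proj1 Hub)) as [R|[E|R]]; auto.
  exfalso. exact (Hmin _ Hub R).
Qed.

Lemma cmp_map_dom x : pdom L x -> pdom M (cmp_map x).
Proof. intro Hx. apply (cmp_map_spec x Hx). Qed.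

Lemma cmp_map_rel x y : pdom L x -> pdom L y -> prel L x y -> prel M (cmp_map x) (cmp_map y).
Proof. intros Hx Hy R. apply (cmp_map_spec y Hy). repeat split; assumption. Qed.

Lemma cmp_map_surj m : pdom M m -> exists x, pdom L x /\ cmp_map x = m.
Proof.
  destruct HM as (HirrM & HtransM & HtotM). destruct He2 as [He2dom He2rel].
  intro Hm. apply NNPP. intro Hnot.
  assert (Hbelow : forall x, pdom L x -> prel M (cmp_map x) m).
  { intro x. induction x as [x IH] using (well_founded_ind WL). intro Hx.
    assert (Hub : strict_ub x m)
      by (split; [exact Hm|]; intros y Hy; apply IH; [exact Hy|apply Hy]).
    destruct (cmp_map_spec x Hx) as [[[Hh _] Hmin] _].
    destruct (HtotM (cmp_map x) m Hh Hm) as [R|[E|R]]; [exact R| |].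
    - exfalso. apply Hnot. eauto.
    - exfalso. exact (Hmin m Hub R). }
  apply (well_founded_order_no_descent M (fun u => cmp_map (e2 u)) WM) with m; auto.
  - split; [intros u Hu; apply cmp_map_dom; auto|].
    intros u v Hu Hv R. apply cmp_map_rel; auto.
Qed.

Theorem iso_of_mutual_embeddings : iso L M.
Proof.
  destruct HL as (HirrL & HtransL & HtotL). destruct HM as (HirrM & HtransM & _).
  exists cmp_map. split; [exact cmp_map_dom|split; [|split; [exact cmp_map_surj|]]].
  - intros x y Hx Hy E. destruct (HtotL x y Hx Hy) as [R|[E'|R]]; [exfalso| exact E'|exfalso];
      apply cmp_map_rel in R; auto; rewrite E in R; exact (HirrM _ (cmp_map_dom y Hy) R).
  - intros x y Hx Hy. split; [now apply cmp_map_rel|].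
    intro R. destruct (HtotL x y Hx Hy) as [R'|[<-|R']]; [exact R'|exfalso..].
    + exact (HirrM _ (cmp_map_dom x Hx) R).
    + apply (HirrM _ (cmp_map_dom x Hx)).
      apply HtransM with (cmp_map y); auto using cmp_map_dom, cmp_map_rel.
Qed.

End MutualEmbeddings.

Lemma iso_trans {T U V : Type} (A : pres T) (B : pres U) (C : pres V) :
  iso A B -> iso B C -> iso A C.
Proof.
  intros (f & Fd & Fi & Fs & Fr) (g & Gd & Gi & Gs & Gr). exists (fun x => g (f x)).
  split; [|split; [|split]]; auto.
  - intros z Hz. destruct (Gs z Hz) as (y & Hy & <-). destruct (Fs y Hy) as (x & Hx & <-). eauto.
  - intros x y Hx Hy. rewrite Fr, Gr; auto. reflexivity.
Qed.

Lemma iso_sym {T U : Type} (A : pres T) (B : pres U) : inhabited T -> iso A B -> iso B A.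
Proof.
  intros HT (f & Fd & Fi & Fs & Fr).
  set (g := fun y => epsilon HT (fun x => pdom A x /\ f x = y)).
  assert (Hg : forall y, pdom B y -> pdom A (g y) /\ f (g y) = y)
    by (intros y Hy; apply epsilon_spec; auto).
  exists g. split; [|split; [|split]].
  - intros y Hy. apply Hg, Hy.
  - intros y y' Hy Hy' E. now rewrite <- (proj2 (Hg y Hy)), <- (proj2 (Hg y' Hy')), E.
  - intros x Hx. exists (f x). split; auto. apply Fi; auto; apply Hg; auto.
  - intros y y' Hy Hy'. destruct (Hg y Hy) as [Hgy Ey], (Hg y' Hy') as [Hgy' Ey'].
    rewrite Fr by auto. now rewrite Ey, Ey'.
Qed.

Lemma iso_ext {T : Type} (A B : pres T) :
  (forall x, pdom A x <-> pdom B x) ->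
  (forall x y, pdom A x -> pdom A y -> (prel A x y <-> prel B x y)) -> iso A B.
Proof.
  intros Hdom Hrel. exists (fun x => x). split; [|split; [|split]]; auto.
  - intros x Hx. now apply Hdom.
  - intros y Hy. exists y. split; [now apply Hdom|reflexivity].
Qed.

Lemma iso_rev_order {T U : Type} (A : pres T) (B : pres U) :
  iso A B -> iso (rev_order A) (rev_order B).
Proof. intros (f & Fd & Fi & Fs & Fr). exists f. cbn. auto. Qed.

Lemma rev_order_involutive {T : Type} (A : pres T) : iso (rev_order (rev_order A)) A.
Proof. apply iso_ext; reflexivity. Qed.

Lemma linear_order_iso {T U : Type} (A : pres T) (B : pres U) :
  iso A B -> linear_order B -> linear_order A.
Proof.
  intros (f & Fd & Fi & Fs & Fr) (Hirr & Htrans & Htot). split; [|split].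
  - intros x Hx R. apply (Hirr (f x)); auto. now apply Fr.
  - intros x y z Hx Hy Hz R1 R2. apply Fr in R1, R2; auto. apply Fr; eauto.
  - intros x y Hx Hy. rewrite !Fr by auto.
    destruct (Htot (f x) (f y)) as [R|[E|R]]; auto.
Qed.

Lemma linear_order_rev {T : Type} (A : pres T) : linear_order A -> linear_order (rev_order A).
Proof.
  intros (Hirr & Htrans & Htot). split; [|split]; cbn; auto.
  - intros x y z Hx Hy Hz R1 R2. eauto.
  - intros x y Hx Hy. destruct (Htot x y) as [R|[E|R]]; auto.
Qed.

Lemma lexlt_irrefl l : ~ lexlt l l.
Proof. induction l; cbn; [tauto|]. intros [H|[_ H]]; [lia|auto]. Qed.

Lemma lexlt_trans l1 l2 l3 : lexlt l1 l2 -> lexlt l2 l3 -> lexlt l1 l3.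
Proof.
  revert l2 l3; induction l1 as [|x l1 IH]; intros [|y l2] [|z l3]; cbn; try tauto.
  intros [H1|[-> H1]] [H2|[-> H2]]; try (left; lia). right. eauto.
Qed.

Lemma lexlt_total l l' : length l = length l' -> lexlt l l' \/ l = l' \/ lexlt l' l.
Proof.
  revert l'; induction l as [|x l IH]; intros [|y l'] E; cbn in *; try discriminate; auto.
  injection E as E. destruct (lt_eq_lt_dec x y) as [[H| ->]|H]; auto.
  destruct (IH l' E) as [H|[ -> |H]]; auto.
Qed.

Lemma lexlt_app l1 l1' l2 l2' : length l1 = length l1' ->
  lexlt (l1 ++ l2) (l1' ++ l2') <-> lexlt l1 l1' \/ (l1 = l1' /\ lexlt l2 l2').
Proof.
  revert l1'; induction l1 as [|x l1 IH]; intros [|y l1'] E; cbn in *; try discriminate.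
  - split; [auto|]. intros [[]|[_ H]]; exact H.
  - injection E as E. rewrite (IH l1' E). split.
    + intros [H|[-> [H|[-> H]]]]; auto.
    + intros [[H|[-> H]]|[H1 H2]]; auto. injection H1 as -> ->. auto.
Qed.

Lemma lexlt_hd l l' : lexlt l l' -> hd 0 l <= hd 0 l'.
Proof. destruct l, l'; cbn; intuition lia. Qed.

Lemma linear_order_omega_pow m : linear_order (omega_pow m).
Proof.
  split; [|split]; cbn.
  - intros l _. apply lexlt_irrefl.
  - intros l1 l2 l3 _ _ _. apply lexlt_trans.
  - intros l l' Hl Hl'. apply lexlt_total. congruence.
Qed.

Lemma well_founded_omega_pow m : well_founded_order (omega_pow m).
Proof.
  assert (Hacc : forall l, length l = m -> Acc (lt_in (omega_pow m)) l).
  2:{ intro l. destruct (Nat.eq_dec (length l) m) as [Hl|Hl]; [now apply Hacc|].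
      constructor. intros l' (_ & Hl' & _). contradiction. }
  induction m as [|m IHm].
  - intros l _. constructor.
    intros [|x l'] (_ & Hl & R); destruct l; cbn in *; try discriminate; tauto.
  - intros [|a t] Hl; cbn in Hl; [discriminate|]. injection Hl as Ht.
    revert t Ht. induction a as [a IHa] using (well_founded_ind lt_wf).
    intros t Ht. induction (IHm t Ht) as [t _ IHt].
    constructor. intros [|b s] (Hs & _ & R); cbn in Hs, R; [discriminate|]. injection Hs as Hs.
    destruct R as [R|[-> R]]; [now apply IHa|]. apply IHt; [repeat split; auto|exact Hs].
Qed.

Lemma not_lexlt_repeat_0 m l : ~ lexlt l (repeat 0 m).
Proof.
  revert l. induction m as [|m IH]; intros [|x l]; cbn; try tauto.
  intros [H|[_ H]]; [lia|exact (IH l H)].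
Qed.

Lemma omega_pow_not_iso_rev m : 1 <= m -> ~ iso (omega_pow m) (rev_order (omega_pow m)).
Proof.
  intros Hm (h & Hd & _ & Hs & Hr). cbn in Hd, Hs, Hr.
  set (l0 := h (repeat 0 m)).
  assert (Hl0 : length l0 = m) by (apply Hd, repeat_length).
  destruct (Hs (S (hd 0 l0) :: tl l0)) as (v & Hv & Ev); [destruct l0; cbn in *; lia|].
  apply (not_lexlt_repeat_0 m v), Hr; [exact Hv|apply repeat_length|].
  rewrite Ev. fold l0. destruct l0; cbn in *; [lia|]. left; lia.
Qed.

(** * Gamma(omega^n) is isomorphic to omega^(2n-1) *)

Lemma linear_order_interval_sum A : linear_order A -> linear_order (interval_sum A).
Proof.
  intros (Hirr & Htrans & Htot).
  assert (Hdom : forall u, pdom (interval_sum A) u ->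
                   exists z y, u = cpair z y /\ pdom A z /\ pdom A y).
  { intros u (z & y & -> & Hs). exists z, y. split; [reflexivity|]. now apply spans_dom. }
  split; [|split].
  - intros u Hu. destruct (Hdom u Hu) as (z & y & -> & Hz & Hy).
    rewrite interval_sum_rel. intros [R|[_ R]]; [exact (Hirr z Hz R)|exact (Hirr y Hy R)].
  - intros u1 u2 u3 Hu1 Hu2 Hu3.
    destruct (Hdom u1 Hu1) as (z1 & y1 & -> & Hz1 & Hy1).
    destruct (Hdom u2 Hu2) as (z2 & y2 & -> & Hz2 & Hy2).
    destruct (Hdom u3 Hu3) as (z3 & y3 & -> & Hz3 & Hy3).
    rewrite !interval_sum_rel. intros [R1|[-> R1]] [R2|[-> R2]]; eauto.
  - intros u u' Hu Hu'.
    destruct (Hdom u Hu) as (z & y & -> & Hz & Hy).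
    destruct (Hdom u' Hu') as (z' & y' & -> & Hz' & Hy').
    rewrite !interval_sum_rel.
    destruct (Htot z z' Hz Hz') as [R|[<-|R]]; auto.
    destruct (Htot y y' Hy Hy') as [R|[<-|R]]; auto.
Qed.

Section IntervalSumOmegaPow.

Variables (A : str) (n : nat) (f : nat -> list nat).
Hypotheses (Hn : 1 <= n)
  (Hf_dom : forall x, pdom A x -> length (f x) = n)
  (Hf_inj : forall x y, pdom A x -> pdom A y -> f x = f y -> x = y)
  (Hf_surj : forall l, length l = n -> exists x, pdom A x /\ f x = l)
  (Hf_rel : forall x y, pdom A x -> pdom A y -> (prel A x y <-> lexlt (f x) (f y))).

Definition preimage (l : list nat) : nat := epsilon (inhabits 0) (fun x => pdom A x /\ f x = l).

Lemma preimage_spec l : length l = n -> pdom A (preimage l) /\ f (preimage l) = l.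
Proof. intro Hl. unfold preimage. apply epsilon_spec, Hf_surj, Hl. Qed.

Lemma preimage_f x : pdom A x -> preimage (f x) = x.
Proof. intro Hx. destruct (preimage_spec (f x)) as [Hp E]; auto. Qed.

Fixpoint max_hd_upto (N : nat) : nat :=
  match N with 0 => hd 0 (f 0) | S N' => Nat.max (max_hd_upto N') (hd 0 (f N)) end.

Lemma hd_le_max_hd_upto j N : j <= N -> hd 0 (f j) <= max_hd_upto N.
Proof.
  induction N as [|N IH]; intro Hj; cbn [max_hd_upto].
  - now replace j with 0 by lia.
  - destruct (Nat.eq_dec j (S N)) as [->|Hne]; [lia|]. specialize (IH ltac:(lia)). lia.
Qed.

Definition width (l : list nat) : nat := S (max_hd_upto (preimage l)).

Fixpoint offset (P : list nat) (k : nat) : nat :=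
  match k with 0 => 0 | S k' => offset P k' + width (P ++ [k']) end.

Lemma offset_lt P k k' : k < k' -> offset P k + width (P ++ [k]) <= offset P k'.
Proof. induction 1; cbn [offset]; lia. Qed.

Lemma spans_hd_lt_width z y : spans A z y -> hd 0 (f y) < width (f z).
Proof.
  intros (a & b & -> & (Ha & Hy & _) & (_ & Hb & R)).
  unfold width. rewrite preimage_f by now apply pdom_max.
  apply Hf_rel, lexlt_hd in R; [|assumption..].
  pose proof (hd_le_max_hd_upto b (Nat.max a b) ltac:(lia)). lia.
Qed.

Lemma f_split_last z : pdom A z -> exists P k, f z = P ++ [k] /\ length P = n - 1.
Proof.
  intro Hz. pose proof (Hf_dom z Hz) as Hl.
  destruct (exists_last (l := f z)) as (P & k & E); [intro E; rewrite E in Hl; cbn in Hl; lia|].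
  exists P, k. split; [exact E|]. rewrite E, length_app in Hl. cbn in Hl. lia.
Qed.

Definition sum_to_omega (u : nat) : list nat :=
  let (z, y) := unpair u in
  let P := removelast (f z) in
  P ++ (offset P (last (f z) 0) + hd 0 (f y)) :: tl (f y).

Lemma sum_to_omega_cpair z y P k : f z = P ++ [k] ->
  sum_to_omega (cpair z y) = P ++ (offset P k + hd 0 (f y)) :: tl (f y).
Proof. intro E. unfold sum_to_omega. now rewrite unpair_cpair, E, removelast_last, last_last. Qed.

Lemma sum_to_omega_embedding :
  order_embedding (interval_sum A) (omega_pow (2 * n - 1)) sum_to_omega.
Proof.
  split.
  - intros u (z & y & -> & Hs). destruct (spans_dom A z y Hs) as [Hz Hy]. cbn [omega_pow pdom].
    destruct (f_split_last z Hz) as (P & k & E & HP). rewrite (sum_to_omega_cpair z y P k E).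
    pose proof (Hf_dom y Hy) as Hly. destruct (f y); cbn in *; rewrite length_app; cbn; lia.
  - intros u u' (z & y & -> & Hs) (z' & y' & -> & Hs').
    destruct (spans_dom A z y Hs) as [Hz Hy]. destruct (spans_dom A z' y' Hs') as [Hz' Hy'].
    destruct (f_split_last z Hz) as (P & k & E & HP).
    destruct (f_split_last z' Hz') as (P' & k' & E' & HP').
    pose proof (spans_hd_lt_width z y Hs) as Hw. rewrite E in Hw.
    rewrite interval_sum_rel. cbn [omega_pow prel].
    rewrite (sum_to_omega_cpair z y P k E), (sum_to_omega_cpair z' y' P' k' E').
    rewrite lexlt_app by congruence.
    intros [R|[<- R]].
    + apply Hf_rel in R; [|assumption..]. rewrite E, E', lexlt_app in R by congruence.
      destruct R as [R|[<- [R|[_ []]]]]; [now left|right; split; [reflexivity|]].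
      left. pose proof (offset_lt P k k' R). lia.
    + rewrite E in E'. apply app_inj_tail in E' as [<- <-]. right. split; [reflexivity|].
      apply Hf_rel in R; [|assumption..].
      pose proof (Hf_dom y Hy) as Hly. pose proof (Hf_dom y' Hy') as Hly'.
      destruct (f y) as [|c t], (f y') as [|c' t']; cbn in *; try lia.
      destruct R as [R|[-> R]]; [left; lia|right; auto].
Qed.

(* With [p0] the first coordinate of [w0], the first coordinates [p0 < p0 + 1 < p0 + 2 + a] put
   [y] strictly between [w0] and [z]. *)
Definition omega_to_sum (w0 : nat) (L : list nat) : nat :=
  let p0 := hd 0 (f w0) in
  let c := firstn n L in
  cpair (preimage ((p0 + 2 + hd 0 c) :: tl c)) (preimage ((p0 + 1) :: skipn n L)).

Lemma omega_to_sum_split w0 L : length L = 2 * n - 1 ->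
  exists a t d, L = (a :: t) ++ d /\ length t = n - 1 /\ length d = n - 1 /\
    omega_to_sum w0 L =
      cpair (preimage ((hd 0 (f w0) + 2 + a) :: t)) (preimage ((hd 0 (f w0) + 1) :: d)).
Proof.
  intro HL. pose proof (firstn_skipn n L) as E.
  assert (Hc : length (firstn n L) = n) by (apply firstn_length_le; lia).
  assert (Hd : length (skipn n L) = n - 1) by (rewrite length_skipn; lia).
  unfold omega_to_sum. destruct (firstn n L) as [|a t]; cbn in Hc; [lia|].
  exists a, t, (skipn n L). repeat split; auto; lia.
Qed.

Lemma omega_to_sum_embedding w0 : pdom A w0 -> (forall x, pdom A x -> w0 <= x) ->
  order_embedding (omega_pow (2 * n - 1)) (interval_sum A) (omega_to_sum w0).
Proof.
  intros Hw0 Hmin. set (p0 := hd 0 (f w0)).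
  assert (Hw0_hd : f w0 = p0 :: tl (f w0)).
  { pose proof (Hf_dom w0 Hw0). subst p0. destruct (f w0); cbn in *; [lia|reflexivity]. }
  assert (Hz : forall a t, length t = n - 1 ->
            pdom A (preimage ((p0 + 2 + a) :: t)) /\
            f (preimage ((p0 + 2 + a) :: t)) = (p0 + 2 + a) :: t)
    by (intros; apply preimage_spec; cbn; lia).
  assert (Hy : forall d, length d = n - 1 ->
            pdom A (preimage ((p0 + 1) :: d)) /\ f (preimage ((p0 + 1) :: d)) = (p0 + 1) :: d)
    by (intros; apply preimage_spec; cbn; lia).
  split.
  - intros L HL. destruct (omega_to_sum_split w0 L HL) as (a & t & d & _ & Ht & Hd & ->).
    fold p0.
    destruct (Hz a t Ht) as [Hzd Hzf], (Hy d Hd) as [Hyd Hyf].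
    eexists _, _. split; [reflexivity|]. exists w0, (preimage ((p0 + 2 + a) :: t)).
    split; [symmetry; apply Nat.max_r, Hmin, Hzd|].
    split; (split; [assumption|split; [assumption|]]); apply Hf_rel; auto.
    + rewrite Hw0_hd, Hyf. cbn. lia.
    + rewrite Hyf, Hzf. cbn. lia.
  - intros L L' HL HL' R. cbn in HL, HL', R.
    destruct (omega_to_sum_split w0 L HL) as (a & t & d & -> & Ht & Hd & ->).
    destruct (omega_to_sum_split w0 L' HL') as (a' & t' & d' & -> & Ht' & Hd' & ->).
    fold p0.
    destruct (Hz a t Ht) as [Hzd Hzf], (Hy d Hd) as [Hyd Hyf].
    destruct (Hz a' t' Ht') as [Hzd' Hzf'], (Hy d' Hd') as [Hyd' Hyf'].
    rewrite interval_sum_rel.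
    apply lexlt_app in R as [R|[E R]]; [| |cbn; congruence].
    + left. apply Hf_rel; auto. rewrite Hzf, Hzf'. cbn in R |- *.
      destruct R as [R|[-> R]]; [left; lia|right; auto].
    + injection E as -> ->. right. split; [reflexivity|].
      apply Hf_rel; auto. rewrite Hyf, Hyf'. cbn. auto.
Qed.

Lemma exists_least_dom : exists w0, pdom A w0 /\ forall x, pdom A x -> w0 <= x.
Proof.
  destruct (Hf_surj (repeat 0 n) (repeat_length 0 n)) as (x & Hx & _).
  destruct (well_founded_minimal lt (pdom A) lt_wf (ex_intro _ x Hx)) as (w0 & Hw0 & Hmin).
  exists w0. split; [exact Hw0|]. intros y Hy. specialize (Hmin y Hy). lia.
Qed.

End IntervalSumOmegaPow.

Lemma interval_sum_omega_pow A n : 1 <= n -> iso A (omega_pow n) ->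
  iso (interval_sum A) (omega_pow (2 * n - 1)).
Proof.
  intros Hn HA. pose proof HA as (f & Hdom & Hinj & Hsurj & Hrel).
  destruct (exists_least_dom A n f Hn Hsurj) as (w0 & Hw0 & Hmin).
  apply (iso_of_mutual_embeddings _ _
           (sum_to_omega A f) (omega_to_sum A n f w0)).
  - apply linear_order_interval_sum, (linear_order_iso _ _ HA), linear_order_omega_pow.
  - apply linear_order_omega_pow.
  - apply well_founded_omega_pow.
  - now apply sum_to_omega_embedding.
  - now apply omega_to_sum_embedding.
  - exact (inhabits []).
Qed.

Lemma interval_sum_rev_order A : iso (interval_sum A) (rev_order (interval_sum (rev_order A))).
Proof.
  assert (Hspans : forall z y, spans A z y <-> spans (rev_order A) z y).
  { intros z y. split; intros (a & b & -> & Hay & Hyb); exists b, a;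
      (split; [apply Nat.max_comm|]); unfold lt_in in *; cbn in *; tauto. }
  apply iso_ext.
  - intro u. cbn [interval_sum rev_order pdom].
    split; intros (z & y & -> & Hs); exists z, y; split; auto; now apply Hspans.
  - intros u u' _ _. cbn [interval_sum rev_order prel].
    split; intros (z & y & z' & y' & -> & -> & R); exists z', y', z, y;
      (split; [reflexivity|split; [reflexivity|]]); destruct R as [R|[-> R]]; auto.
Qed.

Lemma interval_sum_rev_omega_pow A n : 1 <= n -> iso A (rev_order (omega_pow n)) ->
  iso (interval_sum A) (rev_order (omega_pow (2 * n - 1))).
Proof.
  intros Hn HA.
  assert (HrevA : iso (rev_order A) (omega_pow n))
    by exact (iso_trans _ _ _ (iso_rev_order _ _ HA) (rev_order_involutive _)).
  apply (iso_trans _ _ _ (interval_sum_rev_order A)), iso_rev_order.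
  now apply interval_sum_omega_pow.
Qed.

Lemma iso_left_iff {T U V : Type} (X : pres T) (Y : pres U) (Z : pres V) :
  inhabited T -> iso X Y -> (iso X Z <-> iso Y Z).
Proof.
  intros HT HXY. split; [|now apply iso_trans].
  apply iso_trans, (iso_sym _ _ HT HXY).
Qed.

Lemma iso_of_diag_iff (B C : str) : (forall phi, diag B phi <-> diag C phi) -> iso B C.
Proof.
  intro H. apply iso_ext.
  - intro x. specialize (H (SEq x x)). cbn in H. tauto.
  - intros x y Hx Hy. pose proof (H (SLt x y)) as Hlt.
    pose proof (H (SEq x x)) as Hxx. pose proof (H (SEq y y)) as Hyy. cbn in *. tauto.
Qed.

Lemma cls_linear_order k A : cls_omega_pow k A -> linear_order A.
Proof.
  intros [H|H]; apply (linear_order_iso _ _ H).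
  - apply linear_order_omega_pow.
  - apply linear_order_rev, linear_order_omega_pow.
Qed.

Lemma iso_omega_pow_and_rev k (X : str) :
  1 <= k -> iso X (omega_pow k) -> iso X (rev_order (omega_pow k)) -> False.
Proof.
  intros Hk H1 H2. apply (omega_pow_not_iso_rev k Hk).
  now apply (iso_left_iff X _ _ (inhabits 0) H1).
Qed.

Lemma cls_iso_closed k (X Y : str) : iso X Y -> cls_omega_pow k Y -> cls_omega_pow k X.
Proof. intros H [HY|HY]; [left|right]; exact (iso_trans _ _ _ H HY). Qed.

Lemma cls_iso_iff k X Y : 1 <= k -> cls_omega_pow k X -> cls_omega_pow k Y ->
  (iso X Y <-> (iso X (omega_pow k) <-> iso Y (omega_pow k))).
Proof.
  intros Hk HX HY. split.
  - intro HXY. now apply iso_left_iff.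
  - intro E. destruct HX as [HX|HX].
    + apply (iso_trans _ _ _ HX), iso_sym; [exact (inhabits 0)|tauto].
    + assert (HY' : iso Y (rev_order (omega_pow k))).
      { destruct HY as [HY|HY]; [exfalso; apply (iso_omega_pow_and_rev k X); tauto|exact HY]. }
      apply (iso_trans _ _ _ HX), iso_sym; [exact (inhabits 0)|exact HY'].
Qed.

Lemma interval_sum_cls n A : 1 <= n -> cls_omega_pow n A ->
  cls_omega_pow (2 * n - 1) (interval_sum A) /\
  (iso (interval_sum A) (omega_pow (2 * n - 1)) <-> iso A (omega_pow n)).
Proof.
  intros Hn [HA|HA].
  - split; [left; now apply interval_sum_omega_pow|].
    split; intros _; [exact HA|now apply interval_sum_omega_pow].
  - assert (HB : iso (interval_sum A) (rev_order (omega_pow (2 * n - 1))))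
      by now apply interval_sum_rev_omega_pow.
    split; [now right|split; intro H; exfalso].
    + apply (iso_omega_pow_and_rev (2 * n - 1) (interval_sum A)); [lia|exact H|exact HB].
    + exact (iso_omega_pow_and_rev n A Hn H HA).
Qed.

Lemma Gamma_output_iso A B : linear_order A ->
  (forall phi, apply_op Gamma (diag A) phi <-> diag B phi) -> iso B (interval_sum A).
Proof.
  intros (Hirr & _) HB. apply iso_of_diag_iff. intro phi.
  now rewrite <- HB, Gamma_diag.
Qed.

Theorem corollary6p3 (n : nat) (hn : 1 <= n) :
  comp_embeds (cls_omega_pow n) (cls_omega_pow (2 * n - 1)).
Proof.
  exists Gamma. split; [exact Gamma_enum|split].
  - intros A HA. exists (interval_sum A). split; [now apply interval_sum_cls|].
    apply Gamma_diag, (proj1 (cls_linear_order n A HA)).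
  - intros A A' B B' HA HA' HB HB'.
    assert (Hm : 1 <= 2 * n - 1) by lia.
    pose proof (Gamma_output_iso A B (cls_linear_order n A HA) HB) as HBA.
    pose proof (Gamma_output_iso A' B' (cls_linear_order n A' HA') HB') as HBA'.
    destruct (interval_sum_cls n A hn HA) as [HcA HoA].
    destruct (interval_sum_cls n A' hn HA') as [HcA' HoA'].
    rewrite (cls_iso_iff n A A' hn HA HA').
    rewrite (cls_iso_iff (2 * n - 1) B B' Hm (cls_iso_closed _ _ _ HBA HcA)
               (cls_iso_closed _ _ _ HBA' HcA')).
    rewrite (iso_left_iff _ _ (omega_pow _) (inhabits 0) HBA).
    rewrite (iso_left_iff _ _ (omega_pow _) (inhabits 0) HBA').
    now rewrite HoA, HoA'.
Qed.
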